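(* Let $G$ be a finite connected metric graph without terminal vertices, $T$ its universal covering tree, $\Gamma=\pi_1(G)$, and let $(Y,d)$ be a locally compact Hadamard space. Let $\Lambda$ be a group acting properly and co-compactly by isometries on $Y$, let $\rho:\Gamma\to\Lambda$ be a homomorphism, and let $Z$ be the centraliser of $\rho(\Gamma)$ in $\Lambda$. Then there are constants $C_\star$ and $C$ such that for any locally rectifiable $\rho$-equivariant maps $u,v:T\to Y$ there exists $h\in Z$ such that the $L_\infty$-width of the geodesic homotopy $H$ between $u$ and $h\cdot v$ satisfies $$W_\infty(H)\leqslant C_\star\big(L(u)+L(v)\big)+C.$$
   Context: A Hadamard space is a complete metric space $(Y,d)$ such that any two points are joined by a curve whose length equals their distance (a geodesic), and for any points $P,Q,R$ and $0\le\lambda\le1$, the point $Q_\lambda$ on the geodesic from $Q$ to $R$ with $d(Q_\lambda,Q)=\lambda d(Q,R)$ satisfies $d(P,Q_\lambda)^2\le(1-\lambda)d(P,Q)^2+\lambda d(P,R)^2-\lambda(1-\lambda)d(Q,R)^2$. The action of $\Lambda$ is proper if each $y\in Y$ has $r>0$ with $\{g\in\Lambda: gB(y,r)\cap B(y,r)\ne\varnothing\}$ finite, and co-compact if $Y/\Lambda$ is compact. Edges of $G$ and $T$ are identified with compact intervals; $\Gamma$ acts on $T$ by deck transformations. A map $u:T\to Y$ is $\rho$-equivariant if $u(g\cdot x)=\rho(g)\cdot u(x)$; locally rectifiable if each edge has rectifiable image; its length $L(u)$ is the sum over edges of $G$ of the lengths of $u$ restricted to lifts of these edges. For $h\in Z$,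 $(h\cdot v)(x)=h\cdot v(x)$ is $\rho$-equivariant. The geodesic homotopy $H$ between $u$ and $w$ is $H(s,x)=$ point at fraction $s$ of the geodesic from $u(x)$ to $w(x)$, and $W_\infty(H)=\sup_{x\in T}d(u(x),w(x))$. *)

From Stdlib Require Import Reals Lra List ClassicalEpsilon.
Open Scope R_scope.

(* Combinatorial graphs (multigraphs with loops; each edge carries an  *)
(* orientation used only for parametrising it as an interval).        *)
Record graph := Graph { gV : Type; gE : Type; gsrc : gE -> gV; gtgt : gE -> gV }.

(* half-edges: (e, true) starts at src e, (e, false) starts at tgt e *)
Definition hstart (G : graph) (h : gE G * bool) : gV G :=
  if snd h then gsrc G (fst h) else gtgt G (fst h).
Definition hend (G : graph) (h : gE G * bool) : gV G :=
  if snd h then gtgt G (fst h) else gsrc G (fst h).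

Fixpoint is_walk (G : graph) (x : gV G) (w : list (gE G * bool)) (y : gV G) : Prop :=
  match w with
  | nil => x = y
  | h :: w' => hstart G h = x /\ is_walk G (hend G h) w' y
  end.

(* no immediate backtracking *)
Fixpoint reduced (G : graph) (w : list (gE G * bool)) : Prop :=
  match w with
  | h1 :: ((h2 :: _) as w') =>
      ~ (fst h2 = fst h1 /\ snd h2 = negb (snd h1)) /\ reduced G w'
  | _ => True
  end.

Definition gconnected (G : graph) : Prop :=
  inhabited (gV G) /\ forall x y : gV G, exists w, is_walk G x w y.

Definition is_tree (T : graph) : Prop :=
  gconnected T /\
  forall (x : gV T) w, w <> nil -> is_walk T x w x -> ~ reduced T w.

(* a terminal vertex is a vertex of degree one (exactly one half-edge) *)
Definition no_terminal_vertices (G : graph) : Prop :=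
  forall v : gV G,
    ~ (exists h, hstart G h = v /\ forall h', hstart G h' = v -> h' = h).

Record mgraph := MGraph {
  mg :> graph;
  mlen : gE mg -> R;          (* edge e is identified with [0, mlen e] *)
  mEdges : list (gE mg)
}.

Definition finite_metric_graph (G : mgraph) : Prop :=
  (exists lv : list (gV G), forall v, In v lv) /\
  NoDup (mEdges G) /\ (forall e, In e (mEdges G)) /\
  (forall e, 0 < mlen G e).

Record group := Group {
  gcar :> Type;
  gmul : gcar -> gcar -> gcar;
  gone : gcar;
  ginv : gcar -> gcar;
  gmulA : forall x y z, gmul x (gmul y z) = gmul (gmul x y) z;
  gmul1 : forall x, gmul gone x = x;
  gmulV : forall x, gmul (ginv x) x = gone
}.

Definition group_hom (A B : group) (f : A -> B) : Prop :=
  forall x y, f (gmul A x y) = gmul B (f x) (f y).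

Definition in_centraliser (Gam Lam : group) (rho : Gam -> Lam) (h : Lam) : Prop :=
  forall g : Gam, gmul Lam h (rho g) = gmul Lam (rho g) h.

(* (pV, pE) : T -> G is a graph morphism that is a local bijection on  *)
(* half-edges at every vertex (a covering map), T is a tree (so the    *)
(* covering is universal), and Gamma acts on T by graph automorphisms  *)
(* over G, simply transitively on every fibre (so Gamma is the deck    *)
(* group, i.e. pi_1(G)).                                              *)
Definition universal_covering_tree (G : graph) (T : graph)
  (pV : gV T -> gV G) (pE : gE T -> gE G)
  (Gam : group) (aV : Gam -> gV T -> gV T) (aE : Gam -> gE T -> gE T) : Prop :=
  is_tree T /\
  (forall e, gsrc G (pE e) = pV (gsrc T e)) /\
  (forall e, gtgt G (pE e) = pV (gtgt T e)) /\
  (forall w : gV G, exists v : gV T, pV v = w) /\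
  (forall (v : gV T) (h' : gE G * bool), hstart G h' = pV v ->
      exists h : gE T * bool, hstart T h = v /\ (pE (fst h), snd h) = h') /\
  (forall (v : gV T) (h1 h2 : gE T * bool), hstart T h1 = v -> hstart T h2 = v ->
      (pE (fst h1), snd h1) = (pE (fst h2), snd h2) -> h1 = h2) /\
  (forall v, aV (gone Gam) v = v) /\ (forall e, aE (gone Gam) e = e) /\
  (forall g h v, aV (gmul Gam g h) v = aV g (aV h v)) /\
  (forall g h e, aE (gmul Gam g h) e = aE g (aE h e)) /\
  (forall g e, gsrc T (aE g e) = aV g (gsrc T e)) /\
  (forall g e, gtgt T (aE g e) = aV g (gtgt T e)) /\
  (forall g v, pV (aV g v) = pV v) /\ (forall g e, pE (aE g e) = pE e) /\
  (forall v w, pV v = pV w -> exists g, aV g v = w /\ forall g', aV g' v = w -> g' = g).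

Definition metric (Y : Type) (d : Y -> Y -> R) : Prop :=
  (forall x y, d x y = 0 <-> x = y) /\
  (forall x y, d x y = d y x) /\
  (forall x y z, d x z <= d x y + d y z).

Definition complete (Y : Type) (d : Y -> Y -> R) : Prop :=
  forall x : nat -> Y,
    (forall eps, 0 < eps -> exists N, forall n m, (N <= n)%nat -> (N <= m)%nat -> d (x n) (x m) < eps) ->
    exists l, forall eps, 0 < eps -> exists N, forall n, (N <= n)%nat -> d (x n) l < eps.

Definition continuous_on (Y : Type) (d : Y -> Y -> R) (c : R -> Y) (a b : R) : Prop :=
  forall t, a <= t <= b -> forall eps, 0 < eps -> exists delta, 0 < delta /\
    forall s, a <= s <= b -> Rabs (s - t) < delta -> d (c s) (c t) < eps.

Fixpoint rsum (n : nat) (f : nat -> R) : R :=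
  match n with O => 0 | S k => rsum k f + f k end.

Definition polygonal_sums (Y : Type) (d : Y -> Y -> R) (c : R -> Y) (a b : R) (s : R) : Prop :=
  exists (n : nat) (t : nat -> R),
    t O = a /\ t n = b /\ (forall i, (i < n)%nat -> t i <= t (S i)) /\
    s = rsum n (fun i => d (c (t i)) (c (t (S i)))).

Definition rectifiable (Y : Type) (d : Y -> Y -> R) (c : R -> Y) (a b : R) : Prop :=
  bound (polygonal_sums Y d c a b).

Definition has_length (Y : Type) (d : Y -> Y -> R) (c : R -> Y) (a b l : R) : Prop :=
  is_lub (polygonal_sums Y d c a b) l.

Definition curve_length (Y : Type) (d : Y -> Y -> R) (c : R -> Y) (a b : R) : R :=
  epsilon (inhabits 0) (fun l => has_length Y d c a b l).

Definition curve_from_to (Y : Type) (d : Y -> Y -> R) (c : R -> Y) (P Q : Y) : Prop :=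
  continuous_on Y d c 0 1 /\ c 0 = P /\ c 1 = Q.

Definition hadamard_space (Y : Type) (d : Y -> Y -> R) : Prop :=
  metric Y d /\ complete Y d /\
  (forall P Q, exists c, curve_from_to Y d c P Q /\ has_length Y d c 0 1 (d P Q)) /\
  (forall P Q R0 lam c s, 0 <= lam <= 1 ->
     curve_from_to Y d c Q R0 -> has_length Y d c 0 1 (d Q R0) ->
     0 <= s <= 1 -> d (c s) Q = lam * d Q R0 ->
     (d P (c s))^2 <= (1 - lam) * (d P Q)^2 + lam * (d P R0)^2
                      - lam * (1 - lam) * (d Q R0)^2).

(* every point has a (sequentially) compact closed ball around it *)
Definition locally_compact (Y : Type) (d : Y -> Y -> R) : Prop :=
  forall y, exists r, 0 < r /\
    forall x : nat -> Y, (forall n, d y (x n) <= r) ->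
      exists (phi : nat -> nat) (z : Y),
        (forall n, (phi n < phi (S n))%nat) /\ d y z <= r /\
        forall eps, 0 < eps -> exists N, forall n, (N <= n)%nat -> d (x (phi n)) z < eps.

Definition open_set (Y : Type) (d : Y -> Y -> R) (U : Y -> Prop) : Prop :=
  forall x, U x -> exists eps, 0 < eps /\ forall y, d x y < eps -> U y.

Definition isometric_action (Lam : group) (Y : Type) (d : Y -> Y -> R)
  (act : Lam -> Y -> Y) : Prop :=
  (forall y, act (gone Lam) y = y) /\
  (forall g h y, act (gmul Lam g h) y = act g (act h y)) /\
  (forall g x y, d (act g x) (act g y) = d x y).

Definition proper_action (Lam : group) (Y : Type) (d : Y -> Y -> R)
  (act : Lam -> Y -> Y) : Prop :=
  forall y, exists r, 0 < r /\ exists l : list Lam,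
    forall g, (exists z, d y z < r /\ d y (act g z) < r) -> In g l.

(* Y / Lambda compact (quotient topology: open sets of Y/Lambda are the
   Lambda-invariant open sets of Y) *)
Definition cocompact_action (Lam : group) (Y : Type) (d : Y -> Y -> R)
  (act : Lam -> Y -> Y) : Prop :=
  forall (I : Type) (U : I -> Y -> Prop),
    (forall i, open_set Y d (U i)) ->
    (forall i g y, U i y -> U i (act g y)) ->
    (forall y, exists i, U i y) ->
    exists l : list I, forall y, exists i, In i l /\ U i y.

(* Points of T: vertices, and points (e, t) with 0 <= t <= len e on edges *)
Inductive tpoint (T : graph) : Type :=
  | TVert (v : gV T)
  | TEdge (e : gE T) (t : R).
Arguments TVert {T} v.
Arguments TEdge {T} e t.

Definition in_T (T : graph) (lenT : gE T -> R) (x : tpoint T) : Prop :=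
  match x with TVert _ => True | TEdge e t => 0 <= t <= lenT e end.

Record tmap (T : graph) (Y : Type) := TMap {
  mV : gV T -> Y;
  mE : gE T -> R -> Y
}.
Arguments TMap {T Y}.
Arguments mV {T Y}.
Arguments mE {T Y}.

Definition teval {T : graph} {Y : Type} (u : tmap T Y) (x : tpoint T) : Y :=
  match x with TVert v => mV u v | TEdge e t => mE u e t end.

(* u is a well-defined continuous map T -> Y *)
Definition tmap_ok (T : graph) (lenT : gE T -> R) (Y : Type) (d : Y -> Y -> R)
  (u : tmap T Y) : Prop :=
  forall e, mE u e 0 = mV u (gsrc T e) /\ mE u e (lenT e) = mV u (gtgt T e) /\
            continuous_on Y d (mE u e) 0 (lenT e).

Definition equivariant (T : graph) (lenT : gE T -> R) (Gam Lam : group)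
  (aV : Gam -> gV T -> gV T) (aE : Gam -> gE T -> gE T)
  (Y : Type) (act : Lam -> Y -> Y) (rho : Gam -> Lam) (u : tmap T Y) : Prop :=
  (forall g v, mV u (aV g v) = act (rho g) (mV u v)) /\
  (forall g e t, 0 <= t <= lenT e -> mE u (aE g e) t = act (rho g) (mE u e t)).

Definition loc_rectifiable (T : graph) (lenT : gE T -> R) (Y : Type)
  (d : Y -> Y -> R) (u : tmap T Y) : Prop :=
  forall e, rectifiable Y d (mE u e) 0 (lenT e).

(* L(u): sum over edges of G of the length of u on a lift of the edge *)
Definition total_length (G : mgraph) (T : graph) (lift : gE G -> gE T)
  (Y : Type) (d : Y -> Y -> R) (u : tmap T Y) : R :=
  fold_right Rplus 0
    (map (fun e => curve_length Y d (mE u (lift e)) 0 (mlen G e)) (mEdges G)).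

Definition translate {T : graph} {Y : Type} {Lam : group} (act : Lam -> Y -> Y)
  (h : Lam) (v : tmap T Y) : tmap T Y :=
  TMap (fun x => act h (mV v x)) (fun e t => act h (mE v e t)).

(* W_oo(H) <= c for the geodesic homotopy H between u and w, where
   W_oo(H) = sup_{x in T} d(u(x), w(x)) *)
Definition width_le (T : graph) (lenT : gE T -> R) (Y : Type) (d : Y -> Y -> R)
  (u w : tmap T Y) (c : R) : Prop :=
  forall x : tpoint T, in_T T lenT x -> d (teval u x) (teval w x) <= c.

(* For a finite set S of isometries, the displacement function
   D_S(x) = max_{s in S} d(x, s x) is convex and 2-Lipschitz.  The geometric
   heart of the proof ([centraliser_transport]) is: there are A, B such that
   whenever D_S(p) <= r and D_S(q) <= r, some z commuting with S satisfies
   d(p, z q) <= A r + B.  It rests on two facts about a fixed sublevel set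
   {D_S <= c}:
   - properness and co-compactness leave only finitely many conjugates of S
     of bounded displacement above a compact fundamental set K, so two points
     of the sublevel set are moved within bounded distance of each other by
     an element of the centraliser of S ([sublevel_transport]);
   - by compactness D_S exceeds c by a fixed gap away from the sublevel set,
     so by convexity every p lies within 1 + D_S(p)/(2 eps) of it
     ([sublevel_distance]).
   On the tree side, Gamma is generated by the finite set S0 of elements
   relating finitely many base vertices W, each at bounded combinatorial
   distance from a base vertex x0.  For an equivariant u this gives
   D_{rho S0}(u x0) <= 2 K L(u); every vertex is a Gamma-translate of a point
   of W and every point of an edge lies within L(u) of a vertex.  Since the
   transporting element commutes with rho(S0), it lies in Z, and the
   estimates combine into the width bound. *)

From Stdlib Require Import Reals Psatz List ClassicalEpsilon Ranalysis5 ZArith.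
Open Scope R_scope.

(** * Metric spaces *)

Section Metric.
Context (Y : Type) (d : Y -> Y -> R) (Hm : metric Y d).

Lemma d_refl x : d x x = 0.
Proof. destruct Hm as [H _]. apply H; reflexivity. Qed.
Lemma d_sym x y : d x y = d y x.
Proof. destruct Hm as [_ [H _]]. apply H. Qed.
Lemma d_tri x y z : d x z <= d x y + d y z.
Proof. destruct Hm as [_ [_ H]]. apply H. Qed.
Lemma d_nonneg x y : 0 <= d x y.
Proof. pose proof (d_tri x y x). rewrite d_refl, (d_sym y x) in H. lra. Qed.
Lemma d_eq0 x y : d x y = 0 -> x = y.
Proof. destruct Hm as [H _]. apply H. Qed.

Lemma polygonal_sum_3 (c : R -> Y) (a t b : R) : a <= t <= b ->
  polygonal_sums Y d c a b (d (c a) (c t) + d (c t) (c b)).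
Proof.
  intros Ht. exists 2%nat, (fun i => match i with O => a | S O => t | _ => b end).
  split; [reflexivity|]. split; [reflexivity|]. split.
  - intros i Hi. destruct i as [|[|i]]; simpl; lra.
  - simpl. ring.
Qed.

Lemma curve_has_length (c : R -> Y) (a b : R) : a <= b -> rectifiable Y d c a b ->
  has_length Y d c a b (curve_length Y d c a b).
Proof.
  intros Hab Hr. unfold curve_length.
  apply (epsilon_spec (inhabits 0) (fun l => has_length Y d c a b l)).
  destruct (completeness (polygonal_sums Y d c a b) Hr) as [m Hm'].
  - exists (d (c a) (c a) + d (c a) (c b)). apply polygonal_sum_3. lra.
  - exists m. exact Hm'.
Qed.

Lemma curve_bound (c : R -> Y) (a b t : R) : a <= t <= b -> rectifiable Y d c a b ->
  d (c a) (c t) <= curve_length Y d c a b.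
Proof.
  intros Ht Hr. destruct (curve_has_length c a b ltac:(lra) Hr) as [Hub _].
  pose proof (d_nonneg (c t) (c b)).
  pose proof (Hub _ (polygonal_sum_3 c a t b Ht)). lra.
Qed.

Lemma curve_length_nonneg (c : R -> Y) (a b : R) : a <= b -> rectifiable Y d c a b ->
  0 <= curve_length Y d c a b.
Proof.
  intros Hab Hr. pose proof (curve_bound c a b a ltac:(lra) Hr).
  rewrite d_refl in H. exact H.
Qed.

Lemma distance_to_set (P : Y -> Prop) (y0 p : Y) : P y0 ->
  exists del, (forall w, P w -> del <= d p w) /\
              (forall e, 0 < e -> exists w, P w /\ d p w < del + e).
Proof.
  intros Hy0.
  set (E := fun r => exists w, P w /\ r = - d p w).
  destruct (completeness E) as [m [Hub Hlub]].
  { exists 0. intros r [w [_ Er]]. subst. pose proof (d_nonneg p w). lra. }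
  { exists (- d p y0). exists y0. auto. }
  exists (- m). split.
  - intros w Hw. pose proof (Hub (- d p w) (ex_intro _ w (conj Hw eq_refl))). lra.
  - intros e He. apply NNPP. intros Hn.
    assert (Hb : is_upper_bound E (m - e)).
    { intros r [w [Hw Er]]. subst r. apply Rnot_lt_le. intros Hlt. apply Hn. exists w.
      split; auto. lra. }
    pose proof (Hlub _ Hb). lra.
Qed.

End Metric.

(** * Geodesics in a Hadamard space *)

Definition between (Y : Type) (d : Y -> Y -> R) (P Q : Y) (t : R) (z : Y) : Prop :=
  d P z = t * d P Q /\ d z Q = (1 - t) * d P Q.

Definition cn_inequality (Y : Type) (d : Y -> Y -> R) (P Q : Y) (t : R) (z : Y) : Prop :=
  forall X, (d X z)^2 <= (1 - t) * (d X P)^2 + t * (d X Q)^2 - t * (1 - t) * (d P Q)^2.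

Lemma between_iso (Y : Type) (d : Y -> Y -> R) (f : Y -> Y) (P Q z : Y) (t : R) :
  (forall x y, d (f x) (f y) = d x y) ->
  between Y d P Q t z -> between Y d (f P) (f Q) t (f z).
Proof. intros Hf [B1 B2]. unfold between. rewrite !Hf. auto. Qed.

Section Hadamard.
Context (Y : Type) (d : Y -> Y -> R) (HY : hadamard_space Y d).

Let Hm : metric Y d := proj1 HY.

Lemma clamp01_id s : 0 <= s <= 1 -> Rmax 0 (Rmin 1 s) = s.
Proof. intros Hs. unfold Rmax, Rmin. repeat destruct Rle_dec; lra. Qed.

Lemma clamped_distance_continuous (c : R -> Y) (P : Y) :
  continuous_on Y d c 0 1 ->
  forall a, 0 <= a <= 1 ->
  continuity_pt (fun s => d (c (Rmax 0 (Rmin 1 s))) P) a.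
Proof.
  intros Hc a Ha.
  unfold continuity_pt, continue_in, limit1_in, limit_in. simpl.
  intros eps Heps.
  destruct (Hc a Ha eps Heps) as [del [Hdel H]].
  exists del. split; [lra|].
  intros x [_ Hx]. unfold R_dist in *.
  rewrite (clamp01_id a Ha).
  set (s := Rmax 0 (Rmin 1 x)).
  assert (Hs : 0 <= s <= 1) by (unfold s, Rmax, Rmin; repeat destruct Rle_dec; lra).
  assert (Hsa : Rabs (s - a) < del).
  { unfold s, Rmax, Rmin. repeat destruct Rle_dec;
    unfold Rabs in *; repeat destruct Rcase_abs; lra. }
  specialize (H s Hs Hsa).
  pose proof (d_tri Y d Hm (c s) (c a) P).
  pose proof (d_tri Y d Hm (c a) (c s) P).
  rewrite (d_sym Y d Hm (c a) (c s)) in H1.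
  unfold Rabs; destruct Rcase_abs; lra.
Qed.

Lemma curve_reaches_distance (c : R -> Y) (P Q : Y) (t : R) :
  curve_from_to Y d c P Q -> 0 <= t <= 1 ->
  exists s, 0 <= s <= 1 /\ d P (c s) = t * d P Q.
Proof.
  intros [Hc [Hc0 Hc1]] Ht.
  pose proof (d_nonneg Y d Hm P Q).
  destruct (Req_dec (t * d P Q) 0) as [E0|N0].
  { exists 0. split; [lra|]. rewrite Hc0, (d_refl Y d Hm). lra. }
  destruct (Req_dec t 1) as [E1|N1].
  { exists 1. split; [lra|]. rewrite Hc1. subst. ring. }
  assert (Hpos : 0 < t * d P Q) by nra.
  set (f := fun s => d (c (Rmax 0 (Rmin 1 s))) P - t * d P Q).
  assert (Hf : forall a, 0 <= a <= 1 -> continuity_pt f a).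
  { intros a Ha. apply continuity_pt_minus.
    - apply clamped_distance_continuous; auto.
    - apply continuity_pt_const. intros x y; reflexivity. }
  destruct (IVT_interv f 0 1 Hf) as [s [Hs Hfs]].
  - lra.
  - unfold f. rewrite clamp01_id, Hc0, (d_refl Y d Hm) by lra. lra.
  - unfold f. rewrite clamp01_id, Hc1, (d_sym Y d Hm Q P) by lra.
    assert (t < 1) by lra. nra.
  - exists s. split; [exact Hs|]. unfold f in Hfs.
    rewrite clamp01_id in Hfs by exact Hs. rewrite (d_sym Y d Hm). lra.
Qed.

Lemma geodesic_point (P Q : Y) (t : R) : 0 <= t <= 1 ->
  exists z, between Y d P Q t z /\ cn_inequality Y d P Q t z.
Proof.
  intros Ht.
  pose proof HY as [_ [_ [Hgeo HCN]]].
  destruct (Hgeo P Q) as [c [Hcurve Hlen]].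
  destruct (curve_reaches_distance c P Q t Hcurve Ht) as [s [Hs Hds]].
  exists (c s).
  assert (Hsum : d P (c s) + d (c s) Q <= d P Q).
  { destruct Hcurve as [_ [Hc0 Hc1]]. destruct Hlen as [Hub _].
    pose proof (Hub _ (polygonal_sum_3 Y d c 0 s 1 Hs)). rewrite Hc0, Hc1 in H. exact H. }
  pose proof (d_tri Y d Hm P (c s) Q).
  split.
  - split; [exact Hds | lra].
  - intros X. apply (HCN X P Q t c s Ht Hcurve Hlen Hs).
    rewrite (d_sym Y d Hm). exact Hds.
Qed.

Lemma between_exists (P Q : Y) (t : R) : 0 <= t <= 1 -> exists z, between Y d P Q t z.
Proof. intros Ht. destruct (geodesic_point P Q t Ht) as [z [H _]]. eauto. Qed.

(* The point at fraction t is unique (the CAT(0) inequality at a realising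
   point z' forces d(z, z') = 0), so it always satisfies that inequality. *)
Lemma between_cn (P Q : Y) (t : R) (z : Y) : 0 <= t <= 1 ->
  between Y d P Q t z -> cn_inequality Y d P Q t z.
Proof.
  intros Ht Hb.
  destruct (geodesic_point P Q t Ht) as [z' [_ HC']].
  assert (z' = z).
  { apply (d_eq0 Y d Hm).
    specialize (HC' z). destruct Hb as [B1 B2].
    rewrite (d_sym Y d Hm z P), B1, B2 in HC'.
    pose proof (d_nonneg Y d Hm z z').
    assert (d z z' ^ 2 <= 0) by (eapply Rle_trans; [exact HC'|]; right; ring).
    rewrite (d_sym Y d Hm z' z). nra. }
  subst. exact HC'.
Qed.

Lemma between_rev (P Q : Y) (t : R) (z : Y) :
  between Y d P Q t z -> between Y d Q P (1 - t) z.
Proof.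
  intros [B1 B2]. unfold between.
  rewrite (d_sym Y d Hm Q z), (d_sym Y d Hm Q P), B2, (d_sym Y d Hm z P), B1.
  split; ring.
Qed.

Lemma between_common_start (a x y m n : Y) (t : R) : 0 <= t <= 1 ->
  between Y d a x t m -> between Y d a y t n -> d m n <= t * d x y.
Proof.
  intros Ht Hmid Hn.
  pose proof (between_cn a x t m Ht Hmid n) as C1.
  pose proof (between_cn a y t n Ht Hn x) as C2.
  destruct Hn as [N1 _].
  rewrite (d_sym Y d Hm n a), N1, (d_sym Y d Hm n x) in C1.
  rewrite (d_sym Y d Hm x a) in C2.
  assert (Hsq : (d n m)^2 <= (t * d x y)^2).
  { assert (t * d x n ^ 2 <= t * ((1 - t) * d a x ^ 2 + t * d x y ^ 2 - t * (1 - t) * d a y ^ 2))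
      by (apply Rmult_le_compat_l; lra).
    eapply Rle_trans; [exact C1|]. nra. }
  pose proof (d_nonneg Y d Hm n m). pose proof (d_nonneg Y d Hm x y).
  rewrite (d_sym Y d Hm m n). apply Rsqr_incr_0_var; unfold Rsqr; nra.
Qed.

Lemma geodesic_cut (p t : Y) (a b : R) : 0 <= a -> 0 <= b -> d p t <= a + b ->
  exists p1, d p p1 <= a /\ d p1 t <= b.
Proof.
  intros Ha Hb Hd.
  destruct (Rle_dec (d p t) a) as [Hle|Hgt].
  { exists t. rewrite (d_refl Y d Hm). split; auto. }
  assert (Hpt : 0 < d p t) by lra.
  destruct (between_exists p t (a / d p t)) as [p1 [B1 B2]].
  { split.
    - apply Rmult_le_pos; [lra | apply Rlt_le, Rinv_0_lt_compat; lra].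
    - apply (Rmult_le_reg_r (d p t)); auto. unfold Rdiv.
      rewrite Rmult_assoc, Rinv_l by lra. lra. }
  exists p1. rewrite B1, B2. unfold Rdiv. split.
  - rewrite Rmult_assoc, Rinv_l by lra. lra.
  - rewrite Rmult_minus_distr_r, Rmult_assoc, Rinv_l by lra. lra.
Qed.

Lemma between_convex (P Q P' Q' z z' : Y) (t : R) : 0 <= t <= 1 ->
  between Y d P Q t z -> between Y d P' Q' t z' ->
  d z z' <= (1 - t) * d P P' + t * d Q Q'.
Proof.
  intros Ht Hz Hz'.
  destruct (between_exists P Q' t Ht) as [w Hw].
  pose proof (between_common_start P Q Q' z w t Ht Hz Hw).
  assert (Ht' : 0 <= 1 - t <= 1) by lra.
  pose proof (between_common_start Q' P P' w z' (1 - t) Ht'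
                (between_rev _ _ _ _ Hw) (between_rev _ _ _ _ Hz')).
  pose proof (d_tri Y d Hm z w z'). lra.
Qed.

End Hadamard.

(** * Groups and isometric actions *)

(* The group axioms of [group] are one-sided; the other side is derived. *)
Section Group.
Context (Lam : group).
Local Notation "x * y" := (gmul Lam x y).
Local Notation "1" := (gone Lam).
Local Notation inv := (ginv Lam).

Lemma g_cancel_l a x y : a * x = a * y -> x = y.
Proof.
  intros H. rewrite <- (gmul1 Lam x), <- (gmul1 Lam y), <- (gmulV Lam a).
  rewrite <- !gmulA, H. reflexivity.
Qed.

Lemma g_mulV_r x : x * inv x = 1.
Proof.
  assert (Hidem : (x * inv x) * (x * inv x) = x * inv x).
  { rewrite <- gmulA, (gmulA Lam (inv x) x (inv x)), gmulV, gmul1. reflexivity. }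
  rewrite <- (gmul1 Lam (x * inv x)), <- (gmulV Lam (x * inv x)), <- gmulA, Hidem.
  reflexivity.
Qed.

Lemma g_mul1_r x : x * 1 = x.
Proof. rewrite <- (gmulV Lam x), gmulA, g_mulV_r, gmul1. reflexivity. Qed.

Lemma g_cancel_r a x y : x * a = y * a -> x = y.
Proof.
  intros H. rewrite <- (g_mul1_r x), <- (g_mul1_r y), <- (g_mulV_r a).
  rewrite !gmulA, H. reflexivity.
Qed.

Lemma g_inv_mul x y : inv (x * y) = inv y * inv x.
Proof.
  apply (g_cancel_r (x * y)). rewrite gmulV.
  rewrite <- gmulA, (gmulA Lam (inv x) x y), gmulV, gmul1, gmulV. reflexivity.
Qed.

Lemma g_inv1 : inv 1 = 1.
Proof. rewrite <- (gmul1 Lam (inv 1)). apply g_mulV_r. Qed.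

Lemma g_KV x y : x * (inv x * y) = y.
Proof. rewrite gmulA, g_mulV_r, gmul1. reflexivity. Qed.

Definition commute (a b : gcar Lam) : Prop := a * b = b * a.

Lemma commute_mul a b s : commute a s -> commute b s -> commute (a * b) s.
Proof.
  unfold commute. intros Ha Hb.
  rewrite <- gmulA, Hb, gmulA, Ha, gmulA. reflexivity.
Qed.

Lemma commute_mul_r z a b : commute z a -> commute z b -> commute z (a * b).
Proof.
  unfold commute. intros Ha Hb.
  rewrite gmulA, Ha, <- gmulA, Hb, gmulA. reflexivity.
Qed.

Definition conjg (l s : gcar Lam) := inv l * (s * l).

Lemma conjg_mul x y s : conjg (x * y) s = conjg y (conjg x s).
Proof. unfold conjg. rewrite g_inv_mul, <- !gmulA. reflexivity. Qed.

Lemma conjg_1 s : conjg 1 s = s.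
Proof. unfold conjg. rewrite g_inv1, gmul1, g_mul1_r. reflexivity. Qed.

Lemma conjg_eq_commute a b s : conjg a s = conjg b s -> commute (a * inv b) s.
Proof.
  intros H. unfold commute. apply (g_cancel_l (inv (a * inv b))).
  change (inv (a * inv b) * (s * (a * inv b))) with (conjg (a * inv b) s).
  rewrite conjg_mul, H, <- conjg_mul, g_mulV_r, conjg_1, gmulA, gmulV, gmul1.
  reflexivity.
Qed.

End Group.

Lemma hom_one (A B : group) (f : A -> B) : group_hom A B f -> f (gone A) = gone B.
Proof.
  intros Hf. apply (g_cancel_l B (f (gone A))).
  rewrite <- Hf, gmul1, g_mul1_r. reflexivity.
Qed.

Section Action.
Context (Lam : group) (Y : Type) (d : Y -> Y -> R) (act : Lam -> Y -> Y)
        (Ha : isometric_action Lam Y d act).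

Lemma act1 y : act (gone Lam) y = y.
Proof. apply (proj1 Ha). Qed.
Lemma actM g h y : act (gmul Lam g h) y = act g (act h y).
Proof. apply (proj1 (proj2 Ha)). Qed.
Lemma act_iso g x y : d (act g x) (act g y) = d x y.
Proof. apply (proj2 (proj2 Ha)). Qed.
Lemma act_VK g y : act (ginv Lam g) (act g y) = y.
Proof. rewrite <- actM, gmulV, act1. reflexivity. Qed.
Lemma act_KV g y : act g (act (ginv Lam g) y) = y.
Proof. rewrite <- actM, g_mulV_r, act1. reflexivity. Qed.

Lemma act_displacement_conjg l s a : d (act l a) (act s (act l a)) = d a (act (conjg Lam l s) a).
Proof.
  unfold conjg. rewrite !actM, <- (act_iso l a), act_KV. reflexivity.
Qed.

End Action.

Lemma list_bounded {A : Type} (f : A -> R) (l : list A) :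
  exists M, forall x, In x l -> f x <= M.
Proof.
  induction l as [|a l [M HM]].
  - exists 0. intros x [].
  - exists (Rmax M (f a)). intros x [E|Hx]; [subst; apply Rmax_r|].
    eapply Rle_trans; [apply HM; auto | apply Rmax_l].
Qed.

Lemma finite_union {A B : Type} (P : A -> B -> Prop) (l : list A) :
  (forall x, In x l -> exists lx, forall y, P x y -> In y lx) ->
  exists L, forall x y, In x l -> P x y -> In y L.
Proof.
  induction l as [|a l IH]; intros H.
  - exists nil. intros x y [].
  - destruct (H a (or_introl eq_refl)) as [la Hla].
    destruct IH as [L HL]. { intros x Hx. apply H. right. exact Hx. }
    exists (la ++ L). intros x y [E|Hx] Hxy; apply in_or_app.
    + left. subst. auto.
    + right. eauto.
Qed.

Lemma sum_nonneg {A : Type} (f : A -> R) (l : list A) :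
  (forall y, In y l -> 0 <= f y) -> 0 <= fold_right Rplus 0 (map f l).
Proof.
  induction l as [|a l IH]; simpl; intros H; [lra|].
  pose proof (H a (or_introl eq_refl)). pose proof (IH (fun y Hy => H y (or_intror Hy))). lra.
Qed.

Lemma sum_ge {A : Type} (f : A -> R) (l : list A) (x : A) :
  (forall y, In y l -> 0 <= f y) -> In x l -> f x <= fold_right Rplus 0 (map f l).
Proof.
  induction l as [|a l IH]; simpl; intros H Hx; [tauto|].
  pose proof (sum_nonneg f l (fun y Hy => H y (or_intror Hy))).
  pose proof (H a (or_introl eq_refl)).
  destruct Hx as [E|Hx]; [subst; lra|].
  pose proof (IH (fun y Hy => H y (or_intror Hy)) Hx). lra.
Qed.

(** * Displacement functions *)

Definition displacement (Y : Type) (d : Y -> Y -> R) (Lam : group) (act : Lam -> Y -> Y)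
  (S : list Lam) (x : Y) : R :=
  fold_right Rmax 0 (map (fun s => d x (act s x)) S).

Section Displacement.
Context (Y : Type) (d : Y -> Y -> R) (HY : hadamard_space Y d)
  (Lam : group) (act : Lam -> Y -> Y) (Hact : isometric_action Lam Y d act).
Let Hm : metric Y d := proj1 HY.
Local Notation D := (displacement Y d Lam act).

Lemma displacement_nonneg S x : 0 <= D S x.
Proof.
  unfold displacement. induction S; simpl; [lra|].
  apply Rle_trans with (1 := IHS). apply Rmax_r.
Qed.

Lemma displacement_ge S x s : In s S -> d x (act s x) <= D S x.
Proof.
  unfold displacement. induction S as [|a S IH]; simpl; [tauto|]. intros [E|H].
  - subst. apply Rmax_l.
  - eapply Rle_trans; [apply IH; auto | apply Rmax_r].
Qed.

Lemma displacement_le S x r : 0 <= r -> (forall s, In s S -> d x (act s x) <= r) -> D S x <= r.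
Proof.
  unfold displacement. induction S as [|a S IH]; simpl; intros Hr H; auto.
  apply Rmax_lub; auto.
Qed.

Lemma displacement_lipschitz S x x' : D S x <= D S x' + 2 * d x x'.
Proof.
  apply displacement_le.
  - pose proof (displacement_nonneg S x'). pose proof (d_nonneg Y d Hm x x'). lra.
  - intros s Hs. pose proof (displacement_ge S x' s Hs).
    pose proof (d_tri Y d Hm x x' (act s x)).
    pose proof (d_tri Y d Hm x' (act s x') (act s x)).
    rewrite (act_iso Lam Y d act Hact), (d_sym Y d Hm x' x) in H1. lra.
Qed.

Lemma displacement_convex S P Q z t : 0 <= t <= 1 -> between Y d P Q t z ->
  D S z <= (1 - t) * D S P + t * D S Q.
Proof.
  intros Ht Hb. apply displacement_le.
  - pose proof (displacement_nonneg S P). pose proof (displacement_nonneg S Q). nra.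
  - intros s Hs.
    pose proof (between_iso Y d (act s) P Q z t (act_iso Lam Y d act Hact s) Hb) as Hb'.
    pose proof (between_convex Y d HY P Q (act s P) (act s Q) z (act s z) t Ht Hb Hb').
    pose proof (displacement_ge S P s Hs). pose proof (displacement_ge S Q s Hs). nra.
Qed.

Lemma displacement_conjg S l a : D S (act l a) = D (map (conjg Lam l) S) a.
Proof.
  unfold displacement. induction S as [|s S IH]; simpl; auto.
  rewrite IH, (act_displacement_conjg Lam Y d act Hact). reflexivity.
Qed.

End Displacement.

Fixpoint lists_of {A B : Type} (S : list B) (LL : list A) : list (list A) :=
  match S with
  | nil => nil :: nil
  | _ :: S' => flat_map (fun g => map (cons g) (lists_of S' LL)) LL
  end.

Lemma lists_of_in {A B : Type} (f : B -> A) (S : list B) (LL : list A) :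
  (forall s, In s S -> In (f s) LL) -> In (map f S) (lists_of S LL).
Proof.
  induction S as [|s S IH]; simpl; intros H; [left; auto|].
  apply in_flat_map. exists (f s). split; [apply H; auto|].
  apply in_map. apply IH. auto.
Qed.

Lemma map_eq_in {A B : Type} (f g : A -> B) (l : list A) :
  map f l = map g l -> forall x, In x l -> f x = g x.
Proof.
  induction l as [|a l IH]; simpl; intros H x Hx; [tauto|].
  injection H as H1 H2. destruct Hx as [E|Hx]; [subst; auto | auto].
Qed.

Lemma choose_representatives {A B : Type} (rel : A -> B -> Prop) (Q : A -> Prop) (P : list B) :
  exists Rl : list A, (forall r, In r Rl -> Q r) /\
    forall b, In b P -> (exists a, Q a /\ rel a b) -> exists r, In r Rl /\ rel r b.
Proof.
  induction P as [|b P [Rl [HR1 HR2]]].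
  - exists nil. split; [intros r []|]. intros b [].
  - destruct (classic (exists a, Q a /\ rel a b)) as [[a [Ha E]]|Hn].
    + exists (a :: Rl). split.
      * intros r [E'|Hr]; [subst; auto | auto].
      * intros b' [E'|Hb] Hex.
        -- subst b'. exists a. split; [left|]; auto.
        -- destruct (HR2 b' Hb Hex) as [r [Hr Er]]. exists r. split; [right|]; auto.
    + exists Rl. split; auto. intros b' [E'|Hb] Hex; [subst; contradiction | auto].
Qed.

Definition incr (phi : nat -> nat) : Prop := forall n, (phi n < phi (S n))%nat.

Lemma incr_mono phi : incr phi -> forall m n, (m < n)%nat -> (phi m < phi n)%nat.
Proof.
  intros H m n Hmn. induction Hmn.
  - apply H.
  - specialize (H m0). lia.
Qed.

Lemma incr_ge phi : incr phi -> forall n, (n <= phi n)%nat.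
Proof. intros H n. induction n; [lia|]. specialize (H n). lia. Qed.

Lemma incr_comp phi psi : incr phi -> incr psi -> incr (fun n => phi (psi n)).
Proof. intros H1 H2 n. apply incr_mono; auto. Qed.

Lemma infinitely_often_subseq (P : nat -> Prop) :
  (forall N, exists n, (N <= n)%nat /\ P n) -> exists phi, incr phi /\ forall n, P (phi n).
Proof.
  intros H. destruct (choice _ H) as [g Hg].
  set (phi := fix f n := match n with O => g O | S k => g (S (f k)) end).
  exists phi. split.
  - intros n. simpl. destruct (Hg (S (phi n))). lia.
  - intros n. destruct n; simpl; apply Hg.
Qed.

Lemma pigeonhole_from (A : Type) (L : list A) : forall (f : nat -> A) N0,
  (forall n, (N0 <= n)%nat -> In (f n) L) ->
  exists v, In v L /\ exists phi, incr phi /\ forall n, f (phi n) = v.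
Proof.
  induction L as [|a L IH]; intros f N0 H.
  - destruct (H N0 (le_n _)).
  - destruct (classic (forall N, exists n, (N <= n)%nat /\ f n = a)) as [Hinf|Hfin].
    + exists a. split; [left; auto|]. apply (infinitely_often_subseq (fun n => f n = a)). exact Hinf.
    + apply not_all_ex_not in Hfin. destruct Hfin as [N HN].
      destruct (IH f (Nat.max N N0)) as [v [Hv Hphi]].
      * intros n Hn. destruct (H n ltac:(lia)) as [E|E]; auto.
        exfalso. apply HN. exists n. split; [lia|auto].
      * exists v. split; [right; auto|auto].
Qed.

Lemma pigeonhole (A : Type) (L : list A) (f : nat -> A) :
  (forall n, In (f n) L) ->
  exists v, In v L /\ exists phi, incr phi /\ forall n, f (phi n) = v.
Proof. intros H. apply (pigeonhole_from A L f O). auto. Qed.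

Definition conv (Y : Type) (d : Y -> Y -> R) (x : nat -> Y) (z : Y) : Prop :=
  forall eps, 0 < eps -> exists N, forall n, (N <= n)%nat -> d (x n) z < eps.

Lemma conv_subseq Y d x z phi : conv Y d x z -> incr phi -> conv Y d (fun n => x (phi n)) z.
Proof.
  intros H Hp eps He. destruct (H eps He) as [N HN]. exists N. intros n Hn.
  apply HN. pose proof (incr_ge phi Hp n). lia.
Qed.

Lemma inv_succ_pos (n : nat) : 0 < 1 / (INR n + 1).
Proof. apply Rdiv_lt_0_compat; [lra|]. pose proof (pos_INR n). lra. Qed.

Lemma inv_succ_le1 (n : nat) : 1 / (INR n + 1) <= 1.
Proof.
  pose proof (pos_INR n). unfold Rdiv. rewrite Rmult_1_l, <- Rinv_1.
  apply Rinv_le_contravar; lra.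
Qed.

Lemma inv_succ_small (e : R) : 0 < e -> exists N, forall n, (N <= n)%nat -> 1 / (INR n + 1) < e.
Proof.
  intros He. destruct (archimed (1 / e)) as [H1 _].
  assert (Hpos : 0 <= IZR (up (1/e))).
  { assert (0 < 1 / e) by (apply Rdiv_lt_0_compat; lra). lra. }
  exists (Z.to_nat (up (1 / e))). intros n Hn.
  apply le_INR in Hn. rewrite INR_IZR_INZ, Z2Nat.id in Hn by (apply le_IZR; lra).
  assert (0 < INR n + 1) by (pose proof (pos_INR n); lra).
  apply (Rmult_lt_reg_r (INR n + 1)); auto.
  unfold Rdiv. rewrite Rmult_1_l, Rinv_l by lra.
  assert (Hl : 1 / e < INR n + 1) by lra.
  apply (Rmult_lt_compat_r e) in Hl; auto.
  replace (1 / e * e) with 1 in Hl by (field; lra). lra.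
Qed.

(* If no eps > 0 satisfies P, neither does any 1/(n+1): this turns a failed
   uniform statement into a sequence of counterexamples. *)
Lemma no_positive_witness (P : R -> Prop) :
  ~ (exists eps, 0 < eps /\ P eps) -> forall n : nat, ~ P (1 / (INR n + 1)).
Proof. intros H n Hn. apply H. exists (1 / (INR n + 1)). split; [apply inv_succ_pos | exact Hn]. Qed.

Lemma le_eps (x c : R) : (forall e, 0 < e -> x <= c + e) -> x <= c.
Proof.
  intros H. destruct (Rle_dec x c) as [|Hn]; auto.
  specialize (H ((x - c)/2) ltac:(lra)). lra.
Qed.

(** * Proper co-compact actions *)

Definition compact_ball (Y : Type) (d : Y -> Y -> R) (y : Y) (r : R) : Prop :=
  forall x : nat -> Y, (forall n, d y (x n) <= r) ->
    exists phi z, incr phi /\ d y z <= r /\ conv Y d (fun n => x (phi n)) z.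

Section ProperCocompact.
Context (Y : Type) (d : Y -> Y -> R) (HY : hadamard_space Y d)
  (Lam : group) (act : Lam -> Y -> Y) (Hact : isometric_action Lam Y d act).
Let Hm : metric Y d := proj1 HY.

Lemma compact_cover : locally_compact Y d -> cocompact_action Lam Y d act ->
  exists cov : list (Y * R),
  (forall p, In p cov -> 0 < snd p /\ compact_ball Y d (fst p) (snd p)) /\
  (forall y, exists p l, In p cov /\ d (fst p) (act l y) < snd p).
Proof.
  intros HLC Hcc.
  assert (H : forall y, exists r, 0 < r /\ compact_ball Y d y r).
  { intros y. destruct (HLC y) as [r [Hr H]]. exists r. split; auto. }
  destruct (choice _ H) as [rf Hrf].
  destruct (Hcc Y (fun y' x => exists l, d y' (act l x) < rf y')) as [ls Hls].
  - intros y' x [l Hl]. exists (rf y' - d y' (act l x)). split; [lra|].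
    intros y Hy. exists l.
    pose proof (d_tri Y d Hm y' (act l x) (act l y)).
    rewrite (act_iso Lam Y d act Hact) in H0. lra.
  - intros i g y [l Hl]. exists (gmul Lam l (ginv Lam g)).
    rewrite (actM Lam Y d act Hact), (act_VK Lam Y d act Hact). exact Hl.
  - intros y. exists y, (gone Lam). rewrite (act1 Lam Y d act Hact), (d_refl Y d Hm).
    apply Hrf.
  - exists (map (fun y => (y, rf y)) ls). split.
    + intros p Hp. apply in_map_iff in Hp. destruct Hp as [y [E _]]. subst p. apply Hrf.
    + intros y. destruct (Hls y) as [i [Hi [l Hl]]]. exists (i, rf i), l. split; auto.
      apply in_map_iff. exists i. auto.
Qed.

Definition locally_finite_at (x : Y) (r : R) : Prop :=
  exists l : list Lam, forall g, (exists z, d x z < r /\ d x (act g z) < r) -> In g l.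

Section Fundamental.
Context (cov : list (Y * R))
  (Hcov1 : forall p, In p cov -> 0 < snd p /\ compact_ball Y d (fst p) (snd p))
  (Hcov2 : forall y, exists p l, In p cov /\ d (fst p) (act l y) < snd p).

(* K: the union of the balls of the cover, a compact fundamental set. *)
Definition in_fundamental (a : Y) : Prop := exists p, In p cov /\ d (fst p) a <= snd p.

Lemma fundamental_decompose (y : Y) : exists mu q, in_fundamental q /\ y = act mu q.
Proof.
  destruct (Hcov2 y) as [p [l [Hp Hl]]]. exists (ginv Lam l), (act l y). split.
  - exists p. split; auto. lra.
  - rewrite (act_VK Lam Y d act Hact). reflexivity.
Qed.

Lemma fundamental_seq_compact (x : nat -> Y) : (forall n, in_fundamental (x n)) ->
  exists phi z, incr phi /\ in_fundamental z /\ conv Y d (fun n => x (phi n)) z.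
Proof.
  intros Hx. destruct (choice _ Hx) as [pf Hpf].
  destruct (pigeonhole _ cov pf (fun n => proj1 (Hpf n))) as [v [Hv [phi1 [Hphi1 E1]]]].
  destruct (Hcov1 v Hv) as [_ Hb].
  destruct (Hb (fun n => x (phi1 n))) as [phi2 [z [Hphi2 [Hz Hc]]]].
  { intros n. rewrite <- (E1 n). apply Hpf. }
  exists (fun n => phi1 (phi2 n)), z. split; [apply incr_comp; auto|]. split.
  - exists v. auto.
  - exact Hc.
Qed.

Lemma fundamental_bounded (y0 : Y) : exists KD, forall a, in_fundamental a -> d y0 a <= KD.
Proof.
  destruct (list_bounded (fun p => d y0 (fst p) + snd p) cov) as [KD HKD].
  exists KD. intros a [p [Hp Hd]].
  pose proof (HKD p Hp). pose proof (d_tri Y d Hm y0 (fst p) a). lra.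
Qed.

Lemma uniformly_proper : proper_action Lam Y d act ->
  exists del, 0 < del /\ forall x, in_fundamental x -> locally_finite_at x del.
Proof.
  intros Hpr. apply NNPP. intros Hn.
  assert (H : forall n : nat, exists x, in_fundamental x /\ ~ locally_finite_at x (1 / (INR n + 1))).
  { intros n. apply NNPP. intros Hn2.
    apply (no_positive_witness (fun r => forall x, in_fundamental x -> locally_finite_at x r) Hn n).
    intros x Hx. apply NNPP. intros Hx2. apply Hn2. exists x. auto. }
  destruct (choice _ H) as [xs Hxs].
  destruct (fundamental_seq_compact xs (fun n => proj1 (Hxs n))) as [phi [z [Hphi [_ Hc]]]].
  destruct (Hpr z) as [r [Hr [l Hl]]].
  destruct (Hc (r/2) ltac:(lra)) as [N1 HN1].
  destruct (inv_succ_small (r/2) ltac:(lra)) as [N2 HN2].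
  set (n := Nat.max N1 N2).
  pose proof (incr_ge phi Hphi n).
  apply (proj2 (Hxs (phi n))). exists l. intros g [z' [H1 H2]].
  apply Hl. exists z'.
  assert (Hd : d (xs (phi n)) z < r / 2) by (apply HN1; lia).
  assert (He : 1 / (INR (phi n) + 1) < r / 2) by (apply HN2; lia).
  rewrite (d_sym Y d Hm) in Hd.
  pose proof (d_tri Y d Hm z (xs (phi n)) z').
  pose proof (d_tri Y d Hm z (xs (phi n)) (act g z')).
  split; lra.
Qed.

Section NearReturns.
Context (del : R) (Hdel : 0 < del)
  (Hprop : forall x, in_fundamental x -> locally_finite_at x del).
Let eta := del / 4.

Lemma near_returns_repeat (h : nat -> Lam) (q q' : nat -> Y) :
  (forall n, in_fundamental (q n)) -> (forall n, in_fundamental (q' n)) ->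
  (forall n, d (act (h n) (q' n)) (q n) <= eta) ->
  exists m n, (m < n)%nat /\ h m = h n.
Proof.
  intros Hq Hq' Hd.
  destruct (fundamental_seq_compact q' Hq') as [phi1 [z' [Hp1 [Hz' Hc1]]]].
  destruct (fundamental_seq_compact (fun n => q (phi1 n)) (fun n => Hq (phi1 n)))
    as [phi2 [z [Hp2 [_ Hc2]]]].
  set (psi := fun n => phi1 (phi2 n)).
  assert (Hpsi : incr psi) by exact (incr_comp phi1 phi2 Hp1 Hp2).
  destruct (conv_subseq Y d _ _ phi2 Hc1 Hp2 (eta/2) ltac:(unfold eta; lra)) as [Na HNa].
  destruct (Hc2 (eta/2) ltac:(unfold eta; lra)) as [Nb HNb].
  set (N0 := Nat.max Na Nb).
  assert (Hclose : forall n, (N0 <= n)%nat -> d (act (h (psi n)) z') z < 2 * eta).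
  { intros n Hn0.
    pose proof (HNa n ltac:(lia)) as A1. pose proof (HNb n ltac:(lia)) as A2.
    pose proof (Hd (psi n)) as A3. simpl in A1, A2.
    pose proof (d_tri Y d Hm (act (h (psi n)) z') (act (h (psi n)) (q' (psi n))) z).
    pose proof (d_tri Y d Hm (act (h (psi n)) (q' (psi n))) (q (psi n)) z).
    rewrite (act_iso Lam Y d act Hact), (d_sym Y d Hm z' (q' (psi n))) in H.
    unfold psi in *. lra. }
  (* hence h_(psi N0)^-1 h_(psi n) lies in the finite list of near-returns at z' *)
  destruct (Hprop z' Hz') as [l Hl].
  set (a := h (psi N0)).
  destruct (pigeonhole_from _ (map (gmul Lam a) l) (fun n => h (psi n)) N0)
    as [v [_ [phi3 [Hp3 E3]]]].
  { intros n Hn0. apply in_map_iff. exists (gmul Lam (ginv Lam a) (h (psi n))). split.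
    - apply g_KV.
    - apply Hl. exists z'. split.
      + rewrite (d_refl Y d Hm). lra.
      + rewrite (actM Lam Y d act Hact), <- (act_iso Lam Y d act Hact a), (act_KV Lam Y d act Hact).
        pose proof (Hclose n Hn0). pose proof (Hclose N0 (le_n _)).
        pose proof (d_tri Y d Hm (act a z') z (act (h (psi n)) z')).
        rewrite (d_sym Y d Hm z (act (h (psi n)) z')) in H1.
        unfold eta in *. fold a in H0. lra. }
  exists (psi (phi3 O)), (psi (phi3 1%nat)). split.
  - apply incr_mono; [exact Hpsi | apply Hp3].
  - rewrite !E3. reflexivity.
Qed.

Lemma near_returns_finite : exists El : list Lam,
  forall h q q', in_fundamental q -> in_fundamental q' -> d (act h q') q <= eta -> In h El.
Proof.
  apply NNPP. intros Hn.
  assert (H : forall l : list Lam, exists t : Lam * (Y * Y),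
    in_fundamental (fst (snd t)) /\ in_fundamental (snd (snd t)) /\
    d (act (fst t) (snd (snd t))) (fst (snd t)) <= eta /\ ~ In (fst t) l).
  { intros l. apply NNPP. intros Hl. apply Hn. exists l. intros h q q' Hq Hq' Hd.
    apply NNPP. intros Hh. apply Hl. exists (h, (q, q')). simpl. auto. }
  destruct (choice _ H) as [F HF].
  (* the list of the first n elements produced, each new one outside it *)
  set (Ls := fix Ls (n : nat) : list Lam :=
         match n with O => nil | S k => fst (F (Ls k)) :: Ls k end).
  assert (Hin : forall m n, (m < n)%nat -> In (fst (F (Ls m))) (Ls n)).
  { intros m n Hmn. induction Hmn; simpl; auto. }
  destruct (near_returns_repeat (fun n => fst (F (Ls n))) (fun n => fst (snd (F (Ls n))))
              (fun n => snd (snd (F (Ls n)))) (fun n => proj1 (HF (Ls n)))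
              (fun n => proj1 (proj2 (HF (Ls n)))) (fun n => proj1 (proj2 (proj2 (HF (Ls n))))))
    as [m [n [Hmn E]]].
  apply (proj2 (proj2 (proj2 (HF (Ls n))))). rewrite <- E. auto.
Qed.

Section Chains.
Context (El : list Lam)
  (HEl : forall h q q', in_fundamental q -> in_fundamental q' -> d (act h q') q <= eta -> In h El).

(* Products of N + 1 elements of El. *)
Fixpoint el_products (N : nat) : list Lam :=
  match N with
  | O => El
  | S k => flat_map (fun e => map (gmul Lam e) (el_products k)) El
  end.

(* Cutting a segment of length <= N eta into pieces of length eta: points
   mu q, mu' q' of Y (q, q' in K) at distance <= N eta are related by a
   product mu^-1 mu' of N + 1 near-returns. *)
Lemma chain_of_near_returns : forall N p t mu q mu' q',
  p = act mu q -> in_fundamental q -> t = act mu' q' -> in_fundamental q' ->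
  d p t <= INR N * eta -> In (gmul Lam (ginv Lam mu) mu') (el_products N).
Proof.
  induction N as [|N IH]; intros p t mu q mu' q' Ep Hq Et Hq' Hd.
  - simpl in Hd. rewrite Rmult_0_l in Hd.
    assert (p = t).
    { apply (d_eq0 Y d Hm). pose proof (d_nonneg Y d Hm p t). lra. }
    simpl. apply (HEl _ q q' Hq Hq'). subst.
    rewrite (actM Lam Y d act Hact), <- H, (act_VK Lam Y d act Hact), (d_refl Y d Hm).
    unfold eta; lra.
  - rewrite S_INR in Hd.
    destruct (geodesic_cut Y d HY p t eta (INR N * eta)) as [p1 [H1 H2]];
      [unfold eta; lra | pose proof (pos_INR N); unfold eta; nra | lra|].
    destruct (fundamental_decompose p1) as [mu1 [q1 [Hq1 E1]]].
    pose proof (IH p1 t mu1 q1 mu' q' E1 Hq1 Et Hq' H2) as HI.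
    assert (He : In (gmul Lam (ginv Lam mu) mu1) El).
    { apply (HEl _ q q1 Hq Hq1). rewrite (actM Lam Y d act Hact), <- E1.
      assert (Eq : q = act (ginv Lam mu) p) by (rewrite Ep, (act_VK Lam Y d act Hact); reflexivity).
      rewrite Eq, (act_iso Lam Y d act Hact), (d_sym Y d Hm). exact H1. }
    simpl. apply in_flat_map. exists (gmul Lam (ginv Lam mu) mu1). split; auto.
    apply in_map_iff. exists (gmul Lam (ginv Lam mu1) mu'). split; auto.
    rewrite <- gmulA, g_KV. reflexivity.
Qed.

Lemma bounded_displacement_finite_at (y : Y) (Rr : R) :
  exists l : list Lam, forall g, d y (act g y) <= Rr -> In g l.
Proof.
  destruct (fundamental_decompose y) as [mu0 [q0 [Hq0 E0]]].
  assert (Heta : 0 < eta) by (unfold eta; lra).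
  destruct (INR_unbounded (Rr / eta)) as [N HN].
  assert (HRr : Rr <= INR N * eta).
  { apply (Rmult_le_reg_r (/ eta)); [apply Rinv_0_lt_compat; auto|].
    rewrite Rmult_assoc, Rinv_r, Rmult_1_r by lra. unfold Rdiv in HN. lra. }
  exists (map (fun x => gmul Lam mu0 (gmul Lam x (ginv Lam mu0))) (el_products N)).
  intros g Hg. apply in_map_iff.
  exists (gmul Lam (ginv Lam mu0) (gmul Lam g mu0)). split.
  - rewrite <- !gmulA, g_KV, g_mulV_r, g_mul1_r. reflexivity.
  - apply (chain_of_near_returns N y (act g y) mu0 q0 (gmul Lam g mu0) q0 E0 Hq0); auto.
    + rewrite (actM Lam Y d act Hact), E0. reflexivity.
    + lra.
Qed.

End Chains.
End NearReturns.

Context (Hpr : proper_action Lam Y d act).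

Lemma bounded_displacement_finite (y : Y) (Rr : R) :
  exists l : list Lam, forall g, d y (act g y) <= Rr -> In g l.
Proof.
  destruct (uniformly_proper Hpr) as [del [Hdel Hprop]].
  destruct (near_returns_finite del Hdel Hprop) as [El HEl].
  exact (bounded_displacement_finite_at del Hdel El HEl y Rr).
Qed.

Lemma fundamental_displacement_finite (c : R) :
  exists LL : list Lam, forall g a, in_fundamental a -> d a (act g a) <= c -> In g LL.
Proof.
  destruct (finite_union (fun p g => exists a, d (fst p) a <= snd p /\ d a (act g a) <= c) cov)
    as [LL HLL].
  - intros p _. destruct (bounded_displacement_finite (fst p) (c + 2 * snd p)) as [l Hl].
    exists l. intros g [a [Hd Hg]]. apply Hl.
    pose proof (d_tri Y d Hm (fst p) a (act g (fst p))).
    pose proof (d_tri Y d Hm a (act g a) (act g (fst p))).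
    rewrite (act_iso Lam Y d act Hact), (d_sym Y d Hm a (fst p)) in H0. lra.
  - exists LL. intros g a [p [Hp Hd]] Hg. apply (HLL p); eauto.
Qed.

End Fundamental.
End ProperCocompact.

(** * Sublevel sets of a displacement function *)

Section Sublevel.
Context (Y : Type) (d : Y -> Y -> R) (HY : hadamard_space Y d)
  (Lam : group) (act : Lam -> Y -> Y) (Hact : isometric_action Lam Y d act)
  (Hpr : proper_action Lam Y d act)
  (cov : list (Y * R))
  (Hcov1 : forall p, In p cov -> 0 < snd p /\ compact_ball Y d (fst p) (snd p))
  (Hcov2 : forall y, exists p l, In p cov /\ d (fst p) (act l y) < snd p)
  (S : list Lam).
Let Hm : metric Y d := proj1 HY.
Local Notation D := (displacement Y d Lam act S).
Local Notation K := (in_fundamental Y d cov).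

Lemma conjugation_patterns_finite (c : R) : exists Pat : list (list Lam),
  forall l a, K a -> D (act l a) <= c -> In (map (conjg Lam l) S) Pat.
Proof.
  destruct (fundamental_displacement_finite Y d HY Lam act Hact cov Hcov1 Hcov2 Hpr c)
    as [LL HLL].
  exists (lists_of S LL). intros l a Ha HD.
  apply lists_of_in. intros s Hs. apply (HLL _ a Ha).
  rewrite <- (act_displacement_conjg Lam Y d act Hact).
  eapply Rle_trans; [|exact HD]. apply (displacement_ge Y d Lam act). auto.
Qed.

Lemma almost_sublevel_near_sublevel (c : R) (xs : nat -> Y) :
  (forall n, D (xs n) <= c + 1 / (INR n + 1)) ->
  exists n w, D w <= c /\ d (xs n) w < / 4.
Proof.
  intros Hxs.
  assert (Hdec : forall n, exists p : Lam * Y, K (snd p) /\ xs n = act (fst p) (snd p)).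
  { intros n. destruct (fundamental_decompose Y d Lam act Hact cov Hcov2 (xs n))
      as [mu [q [Hq E]]]. exists (mu, q). auto. }
  destruct (choice _ Hdec) as [dec Hd].
  destruct (conjugation_patterns_finite (c + 1)) as [Pat HPat].
  destruct (pigeonhole _ Pat (fun n => map (conjg Lam (fst (dec n))) S))
    as [sig [_ [phi1 [Hp1 E1]]]].
  { intros n. apply (HPat _ (snd (dec n))); [apply Hd|].
    destruct (Hd n) as [_ E]. rewrite <- E.
    pose proof (Hxs n). pose proof (inv_succ_le1 n). lra. }
  destruct (fundamental_seq_compact Y d cov Hcov1 (fun n => snd (dec (phi1 n))))
    as [phi2 [a [Hp2 [_ Hc2]]]].
  { intros n. apply Hd. }
  set (psi := fun n => phi1 (phi2 n)).
  assert (Hpsi : incr psi) by exact (incr_comp _ _ Hp1 Hp2).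
  assert (Hsig : forall n, displacement Y d Lam act sig (snd (dec (psi n))) = D (xs (psi n))).
  { intros n. unfold psi. rewrite <- (E1 (phi2 n)), <- (displacement_conjg Y d Lam act Hact).
    destruct (Hd (phi1 (phi2 n))) as [_ E]. rewrite <- E. reflexivity. }
  assert (HDa : displacement Y d Lam act sig a <= c).
  { apply le_eps. intros e He.
    destruct (Hc2 (e/4) ltac:(lra)) as [N1 HN1].
    destruct (inv_succ_small (e/2) ltac:(lra)) as [N2 HN2].
    set (n := Nat.max N1 N2). pose proof (incr_ge _ Hpsi n).
    pose proof (HN1 n ltac:(lia)) as Hclose. pose proof (HN2 (psi n) ltac:(lia)).
    pose proof (displacement_lipschitz Y d HY Lam act Hact sig a (snd (dec (psi n)))) as Hlip.
    rewrite Hsig, (d_sym Y d Hm) in Hlip. pose proof (Hxs (psi n)).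
    change (d (snd (dec (psi n))) a < e / 4) in Hclose. lra. }
  destruct (Hc2 (/4) ltac:(lra)) as [N3 HN3].
  exists (psi N3), (act (fst (dec (psi N3))) a). split.
  - rewrite (displacement_conjg Y d Lam act Hact). unfold psi. rewrite (E1 (phi2 N3)). exact HDa.
  - destruct (Hd (psi N3)) as [_ E]. rewrite E, (act_iso Lam Y d act Hact).
    exact (HN3 N3 (le_n _)).
Qed.

Lemma displacement_gap (c : R) :
  exists eps, 0 < eps /\ forall x, (forall w, D w <= c -> / 4 <= d x w) -> c + eps <= D x.
Proof.
  apply NNPP. intros Hn.
  assert (H : forall n : nat, exists x, (forall w, D w <= c -> / 4 <= d x w) /\
                                   D x <= c + 1 / (INR n + 1)).
  { intros n. apply NNPP. intros Hn2.
    apply (no_positive_witness (fun e => forall x, (forall w, D w <= c -> / 4 <= d x w) ->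
                                                   c + e <= D x) Hn n).
    intros x Hx. apply NNPP. intros Hx2. apply Hn2. exists x. split; auto. lra. }
  destruct (choice _ H) as [xs Hxs].
  destruct (almost_sublevel_near_sublevel c xs (fun n => proj2 (Hxs n))) as [n [w [Hw Hd]]].
  pose proof (proj1 (Hxs n) w Hw). lra.
Qed.

(* Convexity turns the gap into a linear bound on the distance to the
   sublevel set. *)
Lemma sublevel_distance (c eps : R) (y0 : Y) : 0 <= c -> 0 < eps -> D y0 <= c ->
  (forall x, (forall w, D w <= c -> / 4 <= d x w) -> c + eps <= D x) ->
  forall p, exists w, D w <= c /\ d p w <= 1 + D p / (2 * eps).
Proof.
  intros Hc He Hy0 Hgap p.
  destruct (distance_to_set Y d Hm (fun w => D w <= c) y0 p Hy0) as [del [F1 F2]].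
  pose proof (displacement_nonneg Y d Lam act S p) as HDp.
  assert (Hq : 0 <= D p / (2 * eps)).
  { apply Rmult_le_pos; auto. apply Rlt_le, Rinv_0_lt_compat. lra. }
  destruct (Rlt_dec del (1/2)) as [Hsmall|Hbig].
  { destruct (F2 (1/2) ltac:(lra)) as [w [Hw Hdw]]. exists w. split; auto. lra. }
  destruct (F2 (1/4) ltac:(lra)) as [w [Hw Hdw]]. exists w. split; auto.
  pose proof (F1 w Hw) as Hge.
  set (L := d p w) in *.
  set (t := (1/2) / L).
  assert (Ht : 0 <= t <= 1).
  { unfold t. split.
    - apply Rmult_le_pos; [lra|]. apply Rlt_le, Rinv_0_lt_compat; lra.
    - apply (Rmult_le_reg_r L); [lra|]. unfold Rdiv. rewrite Rmult_assoc, Rinv_l by lra. lra. }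
  assert (HtL : t * L = 1/2) by (unfold t; field; lra).
  (* the point x at distance 1/2 from w towards p is 1/4-far from the sublevel set *)
  destruct (between_exists Y d HY w p t Ht) as [x [B1 B2]].
  assert (Hfar : forall w', D w' <= c -> / 4 <= d x w').
  { intros w' Hw'. pose proof (F1 w' Hw'). pose proof (d_tri Y d Hm p x w').
    rewrite (d_sym Y d Hm p x), B2, (d_sym Y d Hm w p) in H0. fold L in H0. lra. }
  pose proof (Hgap x Hfar) as Hx.
  pose proof (displacement_convex Y d HY Lam act Hact S w p x t Ht (conj B1 B2)) as Hcv.
  assert (Hk : eps <= t * D p).
  { assert ((1 - t) * D w <= (1 - t) * c) by (apply Rmult_le_compat_l; lra).
    assert (t * c >= 0) by nra. lra. }
  assert (Hk2 : 2 * eps * L <= D p).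
  { assert (eps * L <= t * D p * L) by (apply Rmult_le_compat_r; lra).
    replace (t * D p * L) with (D p * (t * L)) in H by ring. rewrite HtL in H. lra. }
  assert (L <= D p / (2 * eps)).
  { apply (Rmult_le_reg_r (2 * eps)); [lra|]. unfold Rdiv.
    rewrite Rmult_assoc, Rinv_l by lra. lra. }
  lra.
Qed.

(* Two points of a sublevel set are moved within bounded distance of each
   other by an element of the centraliser of S: the finitely many patterns
   (conjugates of S) are each realised by a fixed representative. *)
Lemma sublevel_transport (c : R) (y0 : Y) : exists B0, forall w w',
  D w <= c -> D w' <= c ->
  exists z, (forall s, In s S -> commute Lam z s) /\ d w (act z w') <= B0.
Proof.
  destruct (conjugation_patterns_finite c) as [Pat HPat].
  destruct (choose_representatives (fun r sig => map (conjg Lam (fst r)) S = sig)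
              (fun r => K (snd r)) Pat) as [Rl [HR1 HR2]].
  destruct (fundamental_bounded Y d HY cov y0) as [KD HKD].
  destruct (list_bounded (fun r => d y0 (act (fst r) (snd r))) Rl) as [M HM].
  exists (4 * KD + 2 * M). intros w w' Hw Hw'.
  destruct (fundamental_decompose Y d Lam act Hact cov Hcov2 w) as [l [a [Ha Ew]]].
  destruct (fundamental_decompose Y d Lam act Hact cov Hcov2 w') as [l' [a' [Ha' Ew']]].
  subst w w'.
  destruct (HR2 _ (HPat l a Ha Hw) (ex_intro _ (l, a) (conj Ha eq_refl)))
    as [[l1 a1] [Hr1 E1]].
  destruct (HR2 _ (HPat l' a' Ha' Hw') (ex_intro _ (l', a') (conj Ha' eq_refl)))
    as [[l2 a2] [Hr2 E2]].
  simpl in E1, E2.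
  exists (gmul Lam (gmul Lam l (ginv Lam l1)) (gmul Lam l2 (ginv Lam l'))). split.
  - intros s Hs. apply commute_mul.
    + apply conjg_eq_commute. symmetry. apply (map_eq_in _ _ S E1 s Hs).
    + apply conjg_eq_commute. apply (map_eq_in _ _ S E2 s Hs).
  - (* the distance is d(l1 a, l2 a'), bounded through the representatives *)
    rewrite !(actM Lam Y d act Hact), (act_VK Lam Y d act Hact), (act_iso Lam Y d act Hact).
    rewrite <- (act_iso Lam Y d act Hact l1 a), (act_KV Lam Y d act Hact).
    pose proof (HR1 _ Hr1) as K1. pose proof (HR1 _ Hr2) as K2.
    pose proof (HM _ Hr1) as M1. pose proof (HM _ Hr2) as M2. simpl in K1, K2, M1, M2.
    pose proof (d_tri Y d Hm (act l1 a) (act l1 a1) (act l2 a')) as T1.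
    pose proof (d_tri Y d Hm (act l1 a1) (act l2 a2) (act l2 a')) as T2.
    pose proof (d_tri Y d Hm (act l1 a1) y0 (act l2 a2)) as T3.
    rewrite !(act_iso Lam Y d act Hact) in T1, T2.
    pose proof (d_tri Y d Hm a y0 a1) as T4. pose proof (d_tri Y d Hm a2 y0 a') as T5.
    pose proof (HKD a Ha). pose proof (HKD a' Ha'). pose proof (HKD a1 K1). pose proof (HKD a2 K2).
    rewrite (d_sym Y d Hm a y0) in T4. rewrite (d_sym Y d Hm a2 y0) in T5.
    rewrite (d_sym Y d Hm (act l1 a1) y0) in T3.
    lra.
Qed.

End Sublevel.

Lemma centraliser_transport (Y : Type) (d : Y -> Y -> R) (HY : hadamard_space Y d)
  (HLC : locally_compact Y d)
  (Lam : group) (act : Lam -> Y -> Y) (Hact : isometric_action Lam Y d act)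
  (Hpr : proper_action Lam Y d act) (Hcc : cocompact_action Lam Y d act)
  (S : list Lam) (y0 : Y) :
  exists A B, 0 <= A /\ forall p q r,
  displacement Y d Lam act S p <= r -> displacement Y d Lam act S q <= r ->
  exists z, (forall s, In s S -> commute Lam z s) /\ d p (act z q) <= A * r + B.
Proof.
  pose proof (proj1 HY) as Hm.
  destruct (compact_cover Y d HY Lam act Hact HLC Hcc) as [cov [Hcov1 Hcov2]].
  set (c := displacement Y d Lam act S y0).
  assert (Hc : 0 <= c) by apply displacement_nonneg.
  destruct (displacement_gap Y d HY Lam act Hact Hpr cov Hcov1 Hcov2 S c) as [eps [He Hgap]].
  destruct (sublevel_transport Y d HY Lam act Hact Hpr cov Hcov1 Hcov2 S c y0) as [B0 HB0].
  exists (1 / eps), (2 + B0). split.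
  { unfold Rdiv. rewrite Rmult_1_l. apply Rlt_le, Rinv_0_lt_compat; auto. }
  intros p q r Hp Hq.
  destruct (sublevel_distance Y d HY Lam act Hact S c eps y0 Hc He (Rle_refl _) Hgap p)
    as [w [Hw Hpw]].
  destruct (sublevel_distance Y d HY Lam act Hact S c eps y0 Hc He (Rle_refl _) Hgap q)
    as [w' [Hw' Hqw]].
  destruct (HB0 w w' Hw Hw') as [z [Hz Hzd]].
  exists z. split; auto.
  pose proof (d_tri Y d Hm p w (act z q)).
  pose proof (d_tri Y d Hm w (act z w') (act z q)).
  rewrite (act_iso Lam Y d act Hact), (d_sym Y d Hm w' q) in H0.
  assert (Hpr2 : forall x, x <= r -> x / (2 * eps) <= r / (2 * eps)).
  { intros x Hx. apply Rmult_le_compat_r; auto. apply Rlt_le, Rinv_0_lt_compat; lra. }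
  pose proof (Hpr2 _ Hp). pose proof (Hpr2 _ Hq).
  replace (1 / eps * r) with (r / (2 * eps) + r / (2 * eps)) by (field; lra).
  lra.
Qed.

(** * The universal covering tree *)

Section CoveringTree.
Context (G : mgraph) (T : graph) (pV : gV T -> gV G) (pE : gE T -> gE G)
  (Gam : group) (aV : Gam -> gV T -> gV T) (aE : Gam -> gE T -> gE T)
  (Huc : universal_covering_tree G T pV pE Gam aV aE)
  (lift : gE G -> gE T) (Hlift : forall e, pE (lift e) = e).

Lemma uc_src e : gsrc G (pE e) = pV (gsrc T e).
Proof. apply Huc. Qed.
Lemma uc_inj v h1 h2 : hstart T h1 = v -> hstart T h2 = v ->
  (pE (fst h1), snd h1) = (pE (fst h2), snd h2) -> h1 = h2.
Proof. apply Huc. Qed.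
Lemma uc_aV1 v : aV (gone Gam) v = v.
Proof. apply Huc. Qed.
Lemma uc_aVM g h v : aV (gmul Gam g h) v = aV g (aV h v).
Proof. apply Huc. Qed.
Lemma uc_srcA g e : gsrc T (aE g e) = aV g (gsrc T e).
Proof. apply Huc. Qed.
Lemma uc_tgtA g e : gtgt T (aE g e) = aV g (gtgt T e).
Proof. apply Huc. Qed.
Lemma uc_pVA g v : pV (aV g v) = pV v.
Proof. apply Huc. Qed.
Lemma uc_pEA g e : pE (aE g e) = pE e.
Proof. apply Huc. Qed.
Lemma uc_simple v w : pV v = pV w -> exists g, aV g v = w /\ forall g', aV g' v = w -> g' = g.
Proof. apply Huc. Qed.
Lemma uc_conn : gconnected T.
Proof. apply Huc. Qed.

Lemma uc_free g g' v : aV g v = aV g' v -> g = g'.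
Proof.
  intros E. destruct (uc_simple v (aV g v)) as [k [_ Hk]].
  - rewrite uc_pVA. reflexivity.
  - rewrite (Hk g eq_refl), (Hk g' (eq_sym E)). reflexivity.
Qed.

Lemma edge_translate e : exists g, aE g (lift (pE e)) = e.
Proof.
  set (e0 := lift (pE e)).
  assert (Hp : pV (gsrc T e0) = pV (gsrc T e)).
  { rewrite <- !uc_src. unfold e0. rewrite Hlift. reflexivity. }
  destruct (uc_simple _ _ Hp) as [g [Hg _]].
  exists g.
  assert (H : (aE g e0, true) = (e, true)).
  { apply (uc_inj (gsrc T e)).
    - unfold hstart. simpl. rewrite uc_srcA. auto.
    - reflexivity.
    - simpl. rewrite uc_pEA. unfold e0. rewrite Hlift. reflexivity. }
  injection H. auto.
Qed.

Definition base_vertices (x0 : gV T) : list (gV T) :=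
  x0 :: flat_map (fun e => gsrc T (lift e) :: gtgt T (lift e) :: nil) (mEdges G).

Section BaseVertices.
Context (x0 : gV T) (HE : forall e, In e (mEdges G)).

Definition base_translate (v : gV T) (g : Gam) : Prop :=
  exists w, In w (base_vertices x0) /\ aV g w = v.

Lemma half_edge_base_translate h :
  exists g, base_translate (hstart T h) g /\ base_translate (hend T h) g.
Proof.
  destruct h as [e b]. destruct (edge_translate e) as [g Hg]. exists g.
  assert (Hs : base_translate (gsrc T e) g).
  { exists (gsrc T (lift (pE e))). split.
    - right. apply in_flat_map. exists (pE e). simpl. auto.
    - rewrite <- uc_srcA, Hg. reflexivity. }
  assert (Ht : base_translate (gtgt T e) g).
  { exists (gtgt T (lift (pE e))). split.
    - right. apply in_flat_map. exists (pE e). simpl. auto.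
    - rewrite <- uc_tgtA, Hg. reflexivity. }
  unfold hstart, hend. destruct b; simpl; auto.
Qed.

Lemma base_translate_x0 : base_translate x0 (gone Gam).
Proof. exists x0. split; [left; reflexivity | apply uc_aV1]. Qed.

Lemma vertex_base_translate v : exists g, base_translate v g.
Proof.
  destruct uc_conn as [_ Hc]. destruct (Hc x0 v) as [wk Hwk].
  assert (Hwalk : forall w x, is_walk T x w v -> (exists g, base_translate x g) ->
                  exists g, base_translate v g).
  { induction w as [|h w IH]; simpl; intros x Hw Hx.
    - subst. exact Hx.
    - destruct Hw as [_ Hw]. apply (IH _ Hw).
      destruct (half_edge_base_translate h) as [g [_ Hg]]. eauto. }
  exact (Hwalk wk x0 Hwk (ex_intro _ _ base_translate_x0)).
Qed.

Lemma relating_set_exists : exists S0 : list Gam,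
  (forall wa wb g, In wa (base_vertices x0) -> In wb (base_vertices x0) ->
     aV g wa = wb -> In g S0) /\
  (forall g, In g S0 -> exists wa wb,
     In wa (base_vertices x0) /\ In wb (base_vertices x0) /\ aV g wa = wb).
Proof.
  set (W := base_vertices x0).
  destruct (choose_representatives (fun g p => aV g (fst p) = snd p)
              (fun g => exists wa wb, In wa W /\ In wb W /\ aV g wa = wb)
              (list_prod W W)) as [S0 [H1 H2]].
  exists S0. split; [|exact H1].
  intros wa wb g Ha Hb Hg.
  destruct (H2 (wa, wb)) as [r [Hr Er]].
  - apply in_prod; auto.
  - exists g. split; [exists wa, wb; auto | exact Hg].
  - simpl in Er. rewrite (uc_free g r wa); [exact Hr | congruence].
Qed.

Inductive generated (S0 : list Gam) : Gam -> Prop :=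
  | gen_one : generated S0 (gone Gam)
  | gen_mul s a : In s S0 -> generated S0 a -> generated S0 (gmul Gam s a).

(* The elements relating base vertices generate Gamma: follow a walk from
   x0 to gam x0, translating each traversed edge back to a lifted edge. *)
Lemma relating_set_generates (S0 : list Gam)
  (HS0 : forall wa wb g, In wa (base_vertices x0) -> In wb (base_vertices x0) ->
           aV g wa = wb -> In g S0) :
  forall gam, generated S0 gam.
Proof.
  assert (Hsame : forall v g1 g2, base_translate v g1 -> base_translate v g2 ->
                  In (gmul Gam (ginv Gam g1) g2) S0).
  { intros v g1 g2 [w1 [Hw1 E1]] [w2 [Hw2 E2]]. apply (HS0 w2 w1); auto.
    rewrite uc_aVM, E2, <- E1, <- uc_aVM, gmulV, uc_aV1. reflexivity. }
  assert (Hwalk : forall w x y gx gy, is_walk T x w y ->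
                  base_translate x gx -> base_translate y gy ->
                  generated S0 (gmul Gam (ginv Gam gx) gy)).
  { induction w as [|h w IH]; simpl; intros x y gx gy Hw Hx Hy.
    - subst. rewrite <- (g_mul1_r Gam (gmul Gam (ginv Gam gx) gy)).
      apply gen_mul; [apply (Hsame y); auto | apply gen_one].
    - destruct Hw as [Hs Hw].
      destruct (half_edge_base_translate h) as [g [G1 G2]].
      replace (gmul Gam (ginv Gam gx) gy)
        with (gmul Gam (gmul Gam (ginv Gam gx) g) (gmul Gam (ginv Gam g) gy))
        by (rewrite <- gmulA, g_KV; reflexivity).
      apply gen_mul.
      + apply (Hsame x); auto. rewrite <- Hs. exact G1.
      + apply (IH (hend T h) y); auto. }
  intros gam. destruct uc_conn as [_ Hc]. destruct (Hc x0 (aV gam x0)) as [wk Hwk].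
  rewrite <- (gmul1 Gam gam), <- g_inv1 at 1.
  apply (Hwalk wk x0 (aV gam x0)); auto.
  - exact base_translate_x0.
  - exists x0. split; [left; auto | auto].
Qed.

Lemma walk_radius : exists K : nat, forall w, In w (base_vertices x0) ->
  exists wk, is_walk T x0 wk w /\ (length wk <= K)%nat.
Proof.
  destruct uc_conn as [_ Hc].
  induction (base_vertices x0) as [|w L [K HK]].
  - exists O. intros w [].
  - destruct (Hc x0 w) as [wk Hwk].
    exists (Nat.max K (length wk)). intros w' [E|Hw'].
    + subst. exists wk. split; auto. lia.
    + destruct (HK w' Hw') as [wk' [H1 H2]]. exists wk'. split; auto. lia.
Qed.

End BaseVertices.

Lemma base_configuration : (forall e, In e (mEdges G)) ->
  exists x0 S0 K, (forall gam, generated S0 gam) /\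
    (forall g, In g S0 -> exists wa wb,
       In wa (base_vertices x0) /\ In wb (base_vertices x0) /\ aV g wa = wb) /\
    (forall w, In w (base_vertices x0) ->
       exists wk, is_walk T x0 wk w /\ (length wk <= K)%nat).
Proof.
  intros HE. destruct uc_conn as [[x0] _].
  destruct (relating_set_exists x0) as [S0 [HS0gen HS0rel]].
  destruct (walk_radius x0) as [K HK].
  exists x0, S0, K. split; [|split]; auto.
  exact (relating_set_generates x0 HE S0 HS0gen).
Qed.

End CoveringTree.

(** * Equivariant maps of the tree *)

Lemma width_le_mono (T : graph) (lenT : gE T -> R) (Y : Type) (d : Y -> Y -> R)
  (u w : tmap T Y) (c c' : R) :
  width_le T lenT Y d u w c -> c <= c' -> width_le T lenT Y d u w c'.
Proof. intros H Hc x Hx. pose proof (H x Hx). lra. Qed.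

Section EquivariantMaps.
Context (G : mgraph) (T : graph) (pV : gV T -> gV G) (pE : gE T -> gE G)
  (Gam : group) (aV : Gam -> gV T -> gV T) (aE : Gam -> gE T -> gE T)
  (Y : Type) (d : Y -> Y -> R)
  (Lam : group) (act : Lam -> Y -> Y) (rho : Gam -> Lam)
  (lift : gE G -> gE T)
  (Hfin : finite_metric_graph G)
  (Huc : universal_covering_tree G T pV pE Gam aV aE)
  (Hm : metric Y d)
  (Hact : isometric_action Lam Y d act)
  (Hrho : group_hom Gam Lam rho)
  (Hlift : forall e, pE (lift e) = e).
Let lenT := fun e : gE T => mlen G (pE e).

Section OneMap.
Context (u : tmap T Y) (Hu : tmap_ok T lenT Y d u)
  (Heu : equivariant T lenT Gam Lam aV aE Y act rho u)
  (Hru : loc_rectifiable T lenT Y d u).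
Let Lu := total_length G T lift Y d u.

Lemma edge_length_nonneg e : 0 <= curve_length Y d (mE u (lift e)) 0 (mlen G e).
Proof.
  apply (curve_length_nonneg Y d Hm).
  - destruct Hfin as [_ [_ [_ Hpos]]]. apply Rlt_le, Hpos.
  - pose proof (Hru (lift e)) as H. unfold lenT in H. rewrite Hlift in H. exact H.
Qed.

Lemma total_length_nonneg : 0 <= Lu.
Proof. apply sum_nonneg. intros e _. apply edge_length_nonneg. Qed.

(* By equivariance every edge of T is an isometric copy of a lifted edge,
   so each point of it lies within L(u) of its source. *)
Lemma edge_point_bound e t : 0 <= t <= lenT e -> d (mE u e 0) (mE u e t) <= Lu.
Proof.
  intros Ht.
  destruct (edge_translate G T pV pE Gam aV aE Huc lift Hlift e) as [g Hg].
  set (e0 := lift (pE e)) in *.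
  assert (Hlen : lenT e0 = mlen G (pE e)) by (unfold lenT, e0; rewrite Hlift; reflexivity).
  assert (Hlen' : lenT e = mlen G (pE e)) by reflexivity.
  rewrite <- Hg. destruct Heu as [_ HE].
  rewrite (HE g e0 0), (HE g e0 t), (act_iso Lam Y d act Hact) by lra.
  eapply Rle_trans.
  - apply (curve_bound Y d Hm (mE u e0) 0 (lenT e0) t); [lra | apply Hru].
  - rewrite Hlen. unfold Lu, total_length.
    apply (sum_ge (fun e => curve_length Y d (mE u (lift e)) 0 (mlen G e))).
    + intros y _. apply edge_length_nonneg.
    + destruct Hfin as [_ [_ [HE' _]]]. apply HE'.
Qed.

Lemma half_edge_bound h : d (mV u (hstart T h)) (mV u (hend T h)) <= Lu.
Proof.
  destruct h as [e b]. unfold hstart, hend. simpl.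
  destruct (Hu e) as [H0 [H1 _]].
  assert (Hl : 0 <= lenT e).
  { unfold lenT. destruct Hfin as [_ [_ [_ Hpos]]]. apply Rlt_le, Hpos. }
  pose proof (edge_point_bound e (lenT e) ltac:(lra)) as H.
  rewrite H0, H1 in H.
  destruct b; auto. rewrite (d_sym Y d Hm). exact H.
Qed.

Lemma walk_bound : forall w x y, is_walk T x w y ->
  d (mV u x) (mV u y) <= INR (length w) * Lu.
Proof.
  induction w as [|h w IH]; intros x y Hw; simpl in Hw.
  - subst. rewrite (d_refl Y d Hm). simpl. lra.
  - destruct Hw as [Hs Hw]. pose proof (IH _ _ Hw).
    pose proof (half_edge_bound h) as Hh. rewrite Hs in Hh.
    pose proof (d_tri Y d Hm (mV u x) (mV u (hend T h)) (mV u y)).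
    change (length (h :: w)) with (S (length w)). rewrite S_INR. lra.
Qed.

End OneMap.

Section TwoMaps.
Context (u v : tmap T Y)
  (Hu : tmap_ok T lenT Y d u) (Hv : tmap_ok T lenT Y d v)
  (Heu : equivariant T lenT Gam Lam aV aE Y act rho u)
  (Hev : equivariant T lenT Gam Lam aV aE Y act rho v)
  (Hru : loc_rectifiable T lenT Y d u) (Hrv : loc_rectifiable T lenT Y d v).
Let Lu := total_length G T lift Y d u.
Let Lv := total_length G T lift Y d v.

Lemma width_from_vertices (z : Lam) (Bd : R) :
  (forall v', d (mV u v') (act z (mV v v')) <= Bd) ->
  width_le T lenT Y d u (translate act z v) (Bd + Lu + Lv).
Proof.
  intros Hvert x Hx. destruct x as [v'|e t]; simpl in *.
  - pose proof (Hvert v'). pose proof (total_length_nonneg u Hru).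
    pose proof (total_length_nonneg v Hrv). fold Lu Lv in H0, H1. lra.
  - pose proof (edge_point_bound u Heu Hru e t Hx) as Eu.
    pose proof (edge_point_bound v Hev Hrv e t Hx) as Ev.
    destruct (Hu e) as [Hu0 _]. destruct (Hv e) as [Hv0 _].
    pose proof (Hvert (gsrc T e)) as Hs. rewrite <- Hu0, <- Hv0 in Hs.
    pose proof (d_tri Y d Hm (mE u e t) (mE u e 0) (act z (mE v e t))).
    pose proof (d_tri Y d Hm (mE u e 0) (act z (mE v e 0)) (act z (mE v e t))).
    rewrite (act_iso Lam Y d act Hact) in H0.
    rewrite (d_sym Y d Hm (mE u e t) (mE u e 0)) in H.
    fold Lu in Eu. fold Lv in Ev. lra.
Qed.

End TwoMaps.

Section BaseConfiguration.
Context (x0 : gV T) (S0 : list Gam) (K : nat)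
  (HS0 : forall g, In g S0 -> exists wa wb,
     In wa (base_vertices G T lift x0) /\ In wb (base_vertices G T lift x0) /\ aV g wa = wb)
  (HK : forall w, In w (base_vertices G T lift x0) ->
     exists wk, is_walk T x0 wk w /\ (length wk <= K)%nat).

Section OneMapAtBase.
Context (u : tmap T Y) (Hu : tmap_ok T lenT Y d u)
  (Heu : equivariant T lenT Gam Lam aV aE Y act rho u)
  (Hru : loc_rectifiable T lenT Y d u).
Let Lu := total_length G T lift Y d u.

Lemma base_vertex_bound w : In w (base_vertices G T lift x0) ->
  d (mV u x0) (mV u w) <= INR K * Lu.
Proof.
  intros Hw. destruct (HK w Hw) as [wk [Hwk Hl]].
  pose proof (walk_bound u Hu Heu Hru wk x0 w Hwk). apply le_INR in Hl.
  pose proof (total_length_nonneg u Hru). fold Lu in H, H0. nra.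
Qed.

Lemma base_displacement :
  displacement Y d Lam act (map rho S0) (mV u x0) <= 2 * INR K * Lu.
Proof.
  pose proof (total_length_nonneg u Hru). pose proof (pos_INR K).
  apply displacement_le; [fold Lu in H; nra|].
  intros s Hs. apply in_map_iff in Hs. destruct Hs as [g [Eg Hg]]. subst s.
  destruct (HS0 g Hg) as [wa [wb [Ha [Hb Eab]]]].
  destruct Heu as [HeqV _].
  pose proof (d_tri Y d Hm (mV u x0) (mV u wb) (mV u (aV g x0))) as Htri.
  rewrite <- Eab in Htri at 2. rewrite !HeqV, (act_iso Lam Y d act Hact) in Htri.
  rewrite (d_sym Y d Hm (mV u wa)) in Htri.
  pose proof (base_vertex_bound wb Hb). pose proof (base_vertex_bound wa Ha). lra.
Qed.

End OneMapAtBase.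

Section TwoMapsAtBase.
Context (u v : tmap T Y)
  (Hu : tmap_ok T lenT Y d u) (Hv : tmap_ok T lenT Y d v)
  (Heu : equivariant T lenT Gam Lam aV aE Y act rho u)
  (Hev : equivariant T lenT Gam Lam aV aE Y act rho v)
  (Hru : loc_rectifiable T lenT Y d u) (Hrv : loc_rectifiable T lenT Y d v)
  (HE : forall e, In e (mEdges G))
  (z : Lam) (Hz : forall g, commute Lam z (rho g)).
Let Lu := total_length G T lift Y d u.
Let Lv := total_length G T lift Y d v.

Lemma vertex_width v' :
  d (mV u v') (act z (mV v v')) <= INR K * Lu + d (mV u x0) (act z (mV v x0)) + INR K * Lv.
Proof.
  destruct (vertex_base_translate G T pV pE Gam aV aE Huc lift Hlift x0 HE v')
    as [g [w [Hw Eg]]].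
  subst v'. destruct Heu as [HuV _]. destruct Hev as [HvV _].
  rewrite HuV, HvV, <- (actM Lam Y d act Hact z), (Hz g), (actM Lam Y d act Hact),
    (act_iso Lam Y d act Hact).
  pose proof (d_tri Y d Hm (mV u w) (mV u x0) (act z (mV v w))).
  pose proof (d_tri Y d Hm (mV u x0) (act z (mV v x0)) (act z (mV v w))).
  rewrite (act_iso Lam Y d act Hact) in H0.
  rewrite (d_sym Y d Hm (mV u w) (mV u x0)) in H.
  pose proof (base_vertex_bound u Hu Heu Hru w Hw).
  pose proof (base_vertex_bound v Hv Hev Hrv w Hw). fold Lu Lv in H1, H2. lra.
Qed.

End TwoMapsAtBase.
End BaseConfiguration.

Lemma commute_generated (S0 : list Gam) (z : Lam) :
  (forall s, In s S0 -> commute Lam z (rho s)) ->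
  forall a, generated Gam S0 a -> commute Lam z (rho a).
Proof.
  intros H a Ha. induction Ha.
  - rewrite (hom_one Gam Lam rho Hrho). unfold commute. rewrite gmul1, g_mul1_r. reflexivity.
  - rewrite Hrho. apply commute_mul_r; auto.
Qed.

End EquivariantMaps.

Theorem theorem4
  (G : mgraph) (T : graph) (pV : gV T -> gV G) (pE : gE T -> gE G)
  (Gam : group) (aV : Gam -> gV T -> gV T) (aE : Gam -> gE T -> gE T)
  (Y : Type) (d : Y -> Y -> R)
  (Lam : group) (act : Lam -> Y -> Y) (rho : Gam -> Lam)
  (lift : gE G -> gE T) :
  finite_metric_graph G ->
  gconnected G ->
  no_terminal_vertices G ->
  universal_covering_tree G T pV pE Gam aV aE ->
  hadamard_space Y d ->
  locally_compact Y d ->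
  isometric_action Lam Y d act ->
  proper_action Lam Y d act ->
  cocompact_action Lam Y d act ->
  group_hom Gam Lam rho ->
  (forall e, pE (lift e) = e) ->
  let lenT := fun e : gE T => mlen G (pE e) in
  exists Cstar C : R,
    forall u v : tmap T Y,
      tmap_ok T lenT Y d u -> tmap_ok T lenT Y d v ->
      equivariant T lenT Gam Lam aV aE Y act rho u ->
      equivariant T lenT Gam Lam aV aE Y act rho v ->
      loc_rectifiable T lenT Y d u -> loc_rectifiable T lenT Y d v ->
      exists h : Lam,
        in_centraliser Gam Lam rho h /\
        width_le T lenT Y d u (translate act h v)
          (Cstar * (total_length G T lift Y d u + total_length G T lift Y d v) + C).
Proof.
  intros Hfin _ _ Huc HY HLC Hact Hpr Hcc Hrho Hlift lenT.
  pose proof (proj1 HY) as Hm.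
  destruct (base_configuration G T pV pE Gam aV aE Huc lift Hlift (proj1 (proj2 (proj2 Hfin))))
    as [x0 [S0 [K [Hgen [HS0 HK]]]]].
  destruct (classic (inhabited Y)) as [[y0]|HnY].
  2:{ exists 0, 0. intros u. exfalso. exact (HnY (inhabits (mV u x0))). }
  destruct (centraliser_transport Y d HY HLC Lam act Hact Hpr Hcc (map rho S0) y0)
    as [A [B [HA Hcore]]].
  exists (INR K + 1 + 2 * A * INR K), B.
  intros u v Hu Hv Heu Hev Hru Hrv.
  pose proof (total_length_nonneg G T pE Y d lift Hfin Hm Hlift u Hru).
  pose proof (total_length_nonneg G T pE Y d lift Hfin Hm Hlift v Hrv).
  pose proof (pos_INR K).
  (* both base points have displacement <= 2 K (L(u) + L(v)) under rho(S0) *)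
  destruct (Hcore (mV u x0) (mV v x0)
              (2 * INR K * (total_length G T lift Y d u + total_length G T lift Y d v)))
    as [z [Hz Hzd]]; [eapply Rle_trans; [eapply base_displacement; eauto | nra] .. |].
  assert (Hcomm : forall g, commute Lam z (rho g)).
  { intros g. apply (commute_generated Gam Lam rho Hrho S0 z); [|apply Hgen].
    intros s Hs. apply Hz, in_map, Hs. }
  exists z. split; [exact Hcomm|].
  eapply width_le_mono.
  - eapply width_from_vertices; eauto.
    intros v'. eapply vertex_width; eauto. apply Hfin.
  - nra.
Qed.
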